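(* For all rigid analytically trivial dual $t$-motives $H_0,H_1$, the natural map $\mathrm{Hom}_{\bar k[t,\sigma]}(H_0,H_1)\to\mathrm{Hom}_{\mathbb F_q[t]}(H_0^{\mathrm{Betti}},H_1^{\mathrm{Betti}})$ is injective and its cokernel has no $\mathbb F_q[t]$-torsion.
   Context: $\bar k$ is the algebraic closure of $k=\mathbb F_q(T)$ in $\mathbb C_\infty$ (completion of an algebraic closure of $\mathbb F_q((1/T))$, $|T|_\infty=q$). $\mathbb C_\infty\{t\}$ is the ring of power series over $\mathbb C_\infty$ converging on $|t|_\infty\le1$; for $g=\sum a_it^i$, $g^{(-1)}=\sum a_i^{1/q}t^i$. $\bar k[t,\sigma]$ is generated over $\bar k$ by a central variable $t$ and $\sigma$ with $\sigma x=x^{q^{-1}}\sigma$. A dual $t$-motive is a left $\bar k[t,\sigma]$-module free of finite rank over $\bar k[t]$ and over $\bar k[\sigma]$ with $(t-T)^nH\subset\sigma H$ for $n\gg0$. For a dual $t$-motive $H$, $\tilde H=\mathbb C_\infty\{t\}\otimes_{\bar k[t]}H$ with $\sigma(g\otimes h)=g^{(-1)}\otimes\sigma h$, and $H^{\mathrm{Betti}}$ is the $\mathbb F_q[t]$-module of $\sigma$-invariants of $\tilde H$; $H$ is rigid analytically trivial if the natural map $\mathbb C_\infty\{t\}\otimes_{\mathbb F_q[t]}H^{\mathrm{Betti}}\to\tilde H$ is bijective. A morphism $H_0\to H_1$ induces an $\mathbb F_q[t]$-linear map $H_0^{\mathrm{Betti}}\to H_1^{\mathrm{Betti}}$ by $\mathbb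 C_\infty\{t\}$-linear extension. *)

From HB Require Import structures.
From mathcomp Require Import all_boot all_order all_algebra.
From mathcomp Require Import boolp reals.
From Stdlib Require Lists.List.
Set Implicit Arguments. Unset Strict Implicit. Unset Printing Implicit Defensive.
Import Order.TTheory GRing.Theory Num.Theory.
Local Open Scope ring_scope.

Lemma exists_qroot (F : closedFieldType) (q : nat) (x : F) :
  exists y : F, (q == 0%N) || (y ^+ q == x).
Proof.
case: q => [|n]; first by exists 0.
have [y hy] := @solve_monicpoly F n.+1 (fun i => if i == 0%N then x else 0) isT.
exists y; apply/orP; right; apply/eqP; rewrite hy.
rewrite big_ord_recl /= expr0 mulr1 big1 ?addr0 // => i _.
by rewrite mul0r.
Qed.

(** x^{1/q} (for q > 0 this is the unique y with y^q = x in char p, q = p^e) *)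
Definition qroot (F : closedFieldType) (q : nat) (x : F) : F :=
  xchoose (exists_qroot q x).

Section Defs.
Variables (R : realType) (C : closedFieldType) (absC : C -> R) (q : nat) (T : C).

Definition cvg_to (u : nat -> C) (l : C) : Prop :=
  forall e : R, 0 < e -> exists N, forall n, (N <= n)%N -> absC (u n - l) < e.
Definition cauchy (u : nat -> C) : Prop :=
  forall e : R, 0 < e -> exists N, forall m n, (N <= m)%N -> (N <= n)%N ->
    absC (u m - u n) < e.

(** The variable T of k is the element
    T : C; polynomials in {poly C} are used both for F_q[T] (evaluated at T)
    and for the polynomial rings in the central variable t ('X). *)
Definition Fq (x : C) : Prop := x ^+ q = x.
Definition Fq_poly (p : {poly C}) : Prop := forall i, Fq p`_i.
Definition in_k (x : C) : Prop :=
  exists a b : {poly C}, [/\ Fq_poly a, Fq_poly b, b.[T] != 0 & x = a.[T] / b.[T]].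
Definition in_kbar (x : C) : Prop :=
  exists p : {poly C}, [/\ p != 0, forall i, in_k p`_i & root p x].
Definition kbar_poly (p : {poly C}) : Prop := forall i, in_kbar p`_i.

(** F_q((1/T)) = closure of k in C; its algebraic closure; density *)
Definition in_Kinf (x : C) : Prop :=
  exists u : nat -> C, (forall n, in_k (u n)) /\ cvg_to u x.
Definition alg_Kinf (x : C) : Prop :=
  exists p : {poly C}, [/\ p != 0, forall i, in_Kinf p`_i & root p x].

(** C is (a model of) C_infty: characteristic p with q = p^e, an absolute
    value that is multiplicative and ultrametric with |T| = q, C complete,
    algebraically closed (closedFieldType), and the algebraic closure of
    F_q((1/T)) = closure of k is dense in C. *)
Definition is_Cinf : Prop :=
  [/\ exists p e : nat, [/\ prime p, (0 < e)%N, q = (p ^ e)%N & p \in [pchar C]],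
      forall x, 0 <= absC x /\ (absC x = 0 <-> x = 0),
      forall x y, absC (x * y) = absC x * absC y,
      forall x y, absC (x + y) <= Num.max (absC x) (absC y) &
      [/\ absC T = q%:R,
      forall u, cauchy u -> exists l, cvg_to u l &
      forall x, exists u, (forall n, alg_Kinf (u n)) /\ cvg_to u x]].

Definition series := nat -> C.
Definition in_Tate (g : series) : Prop :=
  forall z, absC z <= 1 -> exists l, cvg_to (fun n => \sum_(i < n) g i * z ^+ i) l.
Definition smul (g h : series) : series :=
  fun n => \sum_(i < n.+1) g i * h (n - i)%N.
Definition pmul (p : {poly C}) (g : series) : series :=
  fun n => \sum_(i < n.+1) p`_i * g (n - i)%N.
Definition sadd (g h : series) : series := fun n => g n + h n.
Definition stwist (g : series) : series := fun n => qroot q (g n).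

(** A dual t-motive H of rank r over \bar k[t] is identified with \bar k[t]^r
    (column vectors), sigma acting by  sigma h = Phi * h^{(-1)},  where the
    columns of Phi are the sigma e_j of the standard basis e_j. *)
Definition ptwist (p : {poly C}) : {poly C} := \poly_(i < size p) qroot q p`_i.
Definition vtwist r (h : 'cV[{poly C}]_r) : 'cV[{poly C}]_r := map_mx ptwist h.

Variable r : nat.
Implicit Types (Phi : 'M[{poly C}]_r) (h : 'cV[{poly C}]_r).

Definition in_H h : Prop := forall i, kbar_poly (h i 0).
Definition sigH Phi h : 'cV[{poly C}]_r := Phi *m vtwist h.
(** action of sum_j c_j sigma^j  (P = sum_j c_j X^j encodes the coefficients) *)
Definition sig_act Phi (P : {poly C}) h : 'cV[{poly C}]_r :=
  \sum_(j < size P) (P`_j)%:P *: iter j (sigH Phi) h.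

Definition is_dual_tmotive Phi : Prop :=
  [/\ (* H = \bar k[t]^r is stable under sigma *)
      forall i j, kbar_poly (Phi i j),
      (* free of finite rank over \bar k[sigma] *)
      exists s (b : 'I_s -> 'cV[{poly C}]_r),
        [/\ forall l, in_H (b l),
            forall h, in_H h -> exists P : 'I_s -> {poly C},
              (forall l, kbar_poly (P l)) /\ h = \sum_l sig_act Phi (P l) (b l)
          & forall P : 'I_s -> {poly C}, (forall l, kbar_poly (P l)) ->
              \sum_l sig_act Phi (P l) (b l) = 0 -> forall l, P l = 0] &
      exists n, forall h, in_H h -> exists h', in_H h' /\
        ('X - T%:P) ^+ n *: h = sigH Phi h'].

Definition svec := 'I_r -> series.
Definition in_Htilde (v : svec) : Prop := forall i, in_Tate (v i).
Definition sigT Phi (v : svec) : svec :=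
  fun i n => \sum_(j < r) pmul (Phi i j) (stwist (v j)) n.
Definition in_Betti Phi (v : svec) : Prop :=
  in_Htilde v /\ forall i n, sigT Phi v i n = v i n.
Definition vadd (v w : svec) : svec := fun i n => v i n + w i n.
Definition vact (a : {poly C}) (v : svec) : svec := fun i => pmul a (v i).

(** ** C{t} (x)_{F_q[t]} H^Betti, via the free abelian group on pairs *)
Definition pair_t := (series * svec)%type.
Definition formal := seq (int * pair_t).
Definition valid_formal Phi (l : formal) : Prop :=
  forall x, Stdlib.Lists.List.In x l -> in_Tate x.2.1 /\ in_Betti Phi x.2.2.
Definition coef (l : formal) (p : pair_t) : int :=
  \sum_(x <- l) (if `[< x.2 = p >] then x.1 else 0).
Definition is_relation Phi (m : formal) : Prop :=
  (exists g g' b, [/\ in_Tate g, in_Tate g', in_Betti Phi b &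
     m = [:: (1, (sadd g g', b)); (-1, (g, b)); (-1, (g', b))]]) \/
  (exists g b b', [/\ in_Tate g, in_Betti Phi b, in_Betti Phi b' &
     m = [:: (1, (g, vadd b b')); (-1, (g, b)); (-1, (g, b'))]]) \/
  (exists a g b, [/\ Fq_poly a, in_Tate g, in_Betti Phi b &
     m = [:: (1, (pmul a g, b)); (-1, (g, vact a b))]]).
Definition tensor_zero Phi (l : formal) : Prop :=
  exists rs : seq (int * formal),
    (forall x, Stdlib.Lists.List.In x rs -> is_relation Phi x.2) /\
    forall p, coef l p = \sum_(x <- rs) x.1 * coef x.2 p.
Definition nat_img (l : formal) : svec :=
  fun i n => \sum_(x <- l) (x.1)%:~R * smul x.2.1 (x.2.2 i) n.

Definition rigid_analytically_trivial Phi : Prop :=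
  (forall v, in_Htilde v -> exists l, valid_formal Phi l /\
      forall i n, nat_img l i n = v i n) /\
  (forall l, valid_formal Phi l -> (forall i n, nat_img l i n = 0) ->
      tensor_zero Phi l).

End Defs.

Section Morph.
Variables (R : realType) (C : closedFieldType) (absC : C -> R) (q : nat) (T : C).
Variables (r0 r1 : nat) (Phi0 : 'M[{poly C}]_r0) (Phi1 : 'M[{poly C}]_r1).

Definition is_morphism (f : 'cV[{poly C}]_r0 -> 'cV[{poly C}]_r1) : Prop :=
  [/\ forall h, in_H q T h -> in_H q T (f h),
      forall h h', in_H q T h -> in_H q T h' -> f (h + h') = f h + f h',
      forall c h, in_kbar q T c -> in_H q T h -> f (c%:P *: h) = c%:P *: f h,
      forall h, in_H q T h -> f ('X *: h) = 'X *: f h &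
      forall h, in_H q T h -> f (sigH q Phi0 h) = sigH q Phi1 (f h)].

Definition morph_mx (f : 'cV[{poly C}]_r0 -> 'cV[{poly C}]_r1) : 'M[{poly C}]_(r1, r0) :=
  \matrix_(i, j) f (delta_mx j 0) i 0.
Definition betti_map (f : 'cV[{poly C}]_r0 -> 'cV[{poly C}]_r1) (v : svec C r0) : svec C r1 :=
  fun i n => \sum_(j < r0) pmul (morph_mx f i j) (v j) n.

(** F_q[t]-linear maps H0^Betti -> H1^Betti (only values on H0^Betti matter) *)
Definition is_Fqt_hom (psi : svec C r0 -> svec C r1) : Prop :=
  [/\ forall v, in_Betti absC q Phi0 v -> in_Betti absC q Phi1 (psi v),
      forall v w, in_Betti absC q Phi0 v -> in_Betti absC q Phi0 w ->
        forall i n, psi (vadd v w) i n = vadd (psi v) (psi w) i n &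
      forall a v, Fq_poly q a -> in_Betti absC q Phi0 v ->
        forall i n, psi (vact a v) i n = vact a (psi v) i n].
End Morph.

(* A morphism H0 -> H1 acts as a matrix M over \bar k[t] with
   M Phi0 = Phi1 M^(-1), and its Betti map is the C{t}-linear extension of M.
   By rigid analytic triviality of H0, every unit vector of C{t}^r0 is a
   C{t}-combination of Betti vectors, so every column of M is determined by the
   Betti map: this gives injectivity.  If the Betti map of M is a psi with
   0 <> a in F_q[t], the same combinations write each entry of M as a times a
   power series whose coefficients tend to 0.  Such a product vanishes at every
   root z of a with |z| <= 1, and all roots of a lie in the closed unit disc
   because the nonzero elements of F_q have absolute value 1; hence a divides M
   in \bar k[t].  As a^(-1) = a, the matrix M / a still satisfies the twist
   relation, so it is a morphism, and its Betti map is psi. *)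

From HB Require Import structures.
From mathcomp Require Import all_boot all_order all_algebra.
From mathcomp Require Import boolp reals ring zify.
Set Implicit Arguments. Unset Strict Implicit. Unset Printing Implicit Defensive.
Import Order.TTheory GRing.Theory Num.Theory.
Local Open Scope ring_scope.

Section AlgebraicClosureOfSubfield.
Variables (E : fieldType) (S : divringClosed E).

Inductive subfield_of := SubfieldElt x & x \in S.
Definition subfield_val u := let: SubfieldElt x _ := u in x.
HB.instance Definition _ := [isSub for subfield_val].
HB.instance Definition _ := [Choice of subfield_of by <:].
HB.instance Definition _ := [SubChoice_isSubUnitRing of subfield_of by <:].
HB.instance Definition _ := [SubNzRing_isSubComNzRing of subfield_of by <:].
HB.instance Definition _ := [SubComUnitRing_isSubIntegralDomain of subfield_of by <:].
HB.instance Definition _ := [SubIntegralDomain_isSubField of subfield_of by <:].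

Lemma polyOver_subfield (p : {poly E}) :
  p \is a polyOver S -> exists pS : {poly subfield_of}, map_poly val pS = p.
Proof.
move=> /polyOverP Sp; exists (\poly_(i < size p) insubd (0 : subfield_of) p`_i).
apply/polyP => i; rewrite coef_map_id0 //= coef_poly.
by case: ltnP => hi; [rewrite insubdK ?Sp | rewrite nth_default].
Qed.

Lemma map_subfield_polyOver (pS : {poly subfield_of}) : map_poly val pS \is a polyOver S.
Proof. by apply/polyOverP => i; rewrite coef_map_id0 //; apply: valP. Qed.

Lemma divp_polyOver : {in polyOver S &, forall p d, p %/ d \is a polyOver S}.
Proof.
move=> _ _ /polyOver_subfield[p <-] /polyOver_subfield[d <-].
by rewrite -map_divp map_subfield_polyOver.
Qed.

Definition alg_over (x : E) :=
  exists p : {poly E}, [/\ p != 0, p \is a polyOver S & root p x].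

Lemma alg_overP x : alg_over x <-> algebraicOver (val : subfield_of -> E) x.
Proof.
split=> [[p [pn0 /polyOver_subfield[pS hp] px]] | [pS pn0 px]].
  by exists pS; rewrite ?hp //; apply: contra pn0 => /eqP h; rewrite -hp h map_poly0.
by exists (map_poly val pS); rewrite map_poly_eq0 map_subfield_polyOver.
Qed.

Definition alg_over_pred : pred E := fun x => `[< alg_over x >].

Lemma alg_over_divring_closed : GRing.divring_closed alg_over_pred.
Proof.
have alg x : (x \in alg_over_pred) <-> algebraicOver (val : subfield_of -> E) x.
  by rewrite -alg_overP; split => /asboolP.
split.
- by apply/alg/algebraic1.
- by move=> x y /alg hx /alg hy; apply/alg/algebraic_sub.
- by move=> x y /alg hx /alg hy; apply/alg/algebraic_div.
Qed.

Lemma mem_alg_over x : x \in S -> x \in alg_over_pred.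
Proof.
move=> Sx; apply/asboolP/alg_overP.
by rewrite -[x]/(val (Sub x Sx : subfield_of)); apply: algebraic_id.
Qed.

End AlgebraicClosureOfSubfield.

Lemma eq_big_In (V : nmodType) (I : Type) (s : seq I) (F G : I -> V) :
  (forall x, List.In x s -> F x = G x) -> \sum_(x <- s) F x = \sum_(x <- s) G x.
Proof.
elim: s => [|y s IH] h; first by rewrite !big_nil.
by rewrite !big_cons h /=; [rewrite IH // => x hx; apply: h; right | left].
Qed.

Section PowerSeries.
Variable C : closedFieldType.
Implicit Types (g h k : series C) (a b : {poly C}).

Definition trunc_poly N g : {poly C} := \poly_(i < N.+1) g i.

Lemma smul_trunc g h n N : (n <= N)%N -> smul g h n = (trunc_poly N g * trunc_poly N h)`_n.
Proof.
move=> hn; rewrite coefM; apply: eq_bigr => i _.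
have hi : (i <= N)%N by apply: leq_trans hn; rewrite -ltnS.
by rewrite !coef_poly ltnS hi ltnS (leq_trans (leq_subr _ _) hn).
Qed.

Lemma smulC g h : smul g h = smul h g.
Proof. by apply/funext => n; rewrite !(smul_trunc _ _ (leqnn n)) mulrC. Qed.

Lemma coefM_low n a a' b b' :
  (forall i, (i <= n)%N -> a`_i = a'`_i) -> (forall i, (i <= n)%N -> b`_i = b'`_i) ->
  (a * b)`_n = (a' * b')`_n.
Proof.
move=> ha hb; rewrite !coefM; apply: eq_bigr => i _.
by rewrite ha -1?ltnS // hb // leq_subr.
Qed.

Lemma smulA g h k : smul g (smul h k) = smul (smul g h) k.
Proof.
apply/funext => n; rewrite !(smul_trunc _ _ (leqnn n)).
have trunc_smul g' h' i : (i <= n)%N ->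
    (trunc_poly n (smul g' h'))`_i = (trunc_poly n g' * trunc_poly n h')`_i.
  by move=> hi; rewrite coef_poly ltnS hi (smul_trunc _ _ hi).
rewrite (coefM_low (a' := trunc_poly n g) (b' := trunc_poly n h * trunc_poly n k)) //;
  last exact: trunc_smul.
rewrite [RHS](coefM_low (a' := trunc_poly n g * trunc_poly n h) (b' := trunc_poly n k)) ?mulrA //.
exact: trunc_smul.
Qed.

Lemma smul_sumr (I : Type) (s : seq I) (F : I -> series C) g n :
  smul g (fun m => \sum_(x <- s) F x m) n = \sum_(x <- s) smul g (F x) n.
Proof. by rewrite /smul; under eq_bigr do rewrite mulr_sumr; rewrite exchange_big. Qed.

Lemma smul_scaler c g h n : smul g (fun m => c * h m) n = c * smul g h n.
Proof. by rewrite /smul mulr_sumr; apply: eq_bigr => i _; rewrite mulrCA. Qed.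

Lemma pmul_sumr (I : Type) (s : seq I) (F : I -> series C) a n :
  pmul a (fun m => \sum_(x <- s) F x m) n = \sum_(x <- s) pmul a (F x) n.
Proof. exact: smul_sumr. Qed.

Lemma pmul_scaler c a h n : pmul a (fun m => c * h m) n = c * pmul a h n.
Proof. exact: smul_scaler. Qed.

Lemma pmulM a b g : pmul (a * b) g = pmul a (pmul b g).
Proof.
rewrite [pmul a _]/pmul -/(smul (fun i => a`_i) _) smulA.
by congr smul; apply/funext => n; rewrite coefM.
Qed.

Lemma pmul_smul a g h : pmul a (smul g h) = smul g (pmul a h).
Proof.
rewrite [pmul a _]/pmul -/(smul (fun i => a`_i) _) [pmul a h]/pmul -/(smul (fun i => a`_i) h).
by rewrite smulA [smul _ g]smulC -smulA.
Qed.

Lemma pmul_eq0 a d : a != 0 -> pmul a d = (fun _ => 0) -> d = (fun _ => 0).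
Proof.
move=> a0 /(congr1 (fun u => u _)) hd.
have ex : exists i, a`_i != 0 by exists (size a).-1; rewrite -lead_coefE lead_coef_eq0.
pose k := ex_minn ex.
have [ak0 a_lt_k] : a`_k != 0 /\ forall i, (i < k)%N -> a`_i = 0.
  rewrite /k; case: ex_minnP => m hm mmin; split => // i hi.
  by apply/eqP; apply: contraTT hi => /mmin; rewrite -leqNgt.
(* the coefficient of t^(n+k) in a d is a_k d_n plus terms in d_m, m < n *)
apply/funext; elim/ltn_ind => n IH.
have := hd (n + k)%N; rewrite /pmul.
have kl : (k < (n + k).+1)%N by rewrite ltnS leq_addl.
rewrite (bigD1 (Ordinal kl)) //= big1 ?addr0 ?addnK.
  by move/eqP; rewrite mulf_eq0 (negbTE ak0) => /eqP.
move=> i /eqP hik; have [ilk | ikl] := ltnP i k; first by rewrite a_lt_k // mul0r.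
have kli : (k < i)%N by rewrite ltn_neqAle ikl andbT eq_sym; apply/eqP => e; apply/hik/val_inj.
by rewrite IH ?mulr0 //; have := ltn_ord i; rewrite ltnS; lia.
Qed.

Lemma pmul_inj a : a != 0 -> injective (pmul a).
Proof.
move=> a0 d d' e; apply/funext => n; apply/eqP; rewrite -subr_eq0; apply/eqP.
have /pmul_eq0 : pmul a (fun m => d m - d' m) = fun _ => 0.
  apply/funext => m; rewrite /pmul; under eq_bigr do rewrite mulrBr.
  by rewrite sumrB; have := congr1 (fun u => u m) e; rewrite /pmul => ->; rewrite subrr.
by move=> /(_ a0) /(congr1 (fun u => u n)).
Qed.

End PowerSeries.

Section UltrametricAbsoluteValue.
Variables (R : realType) (C : closedFieldType) (absC : C -> R).
Hypothesis abs_def : forall x, 0 <= absC x /\ (absC x = 0 <-> x = 0).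
Hypothesis absM : forall x y, absC (x * y) = absC x * absC y.
Hypothesis abs_ultra : forall x y, absC (x + y) <= Num.max (absC x) (absC y).

Lemma abs_ge0 x : 0 <= absC x. Proof. by case: (abs_def x). Qed.
Lemma abs0 : absC 0 = 0. Proof. by case: (abs_def 0) => _ [_ ->]. Qed.
Lemma abs_eq0 x : absC x = 0 -> x = 0. Proof. by case: (abs_def x) => _ []. Qed.

Lemma abs1 : absC 1 = 1.
Proof.
have : absC 1 != 0 by apply/eqP => /abs_eq0 /eqP; rewrite oner_eq0.
by move/mulIf; apply; rewrite mul1r -absM mulr1.
Qed.

Lemma absX x n : absC (x ^+ n) = absC x ^+ n.
Proof. by elim: n => [|n IH]; rewrite ?expr0 ?abs1 // !exprS absM IH. Qed.

Lemma abs_unity_root x m : (0 < m)%N -> x ^+ m = 1 -> absC x = 1.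
Proof. by move=> m0 xm; apply/eqP; rewrite -(pexpr_eq1 m0) ?abs_ge0 // -absX xm abs1. Qed.

Lemma absN x : absC (- x) = absC x.
Proof. by rewrite -mulN1r absM (@abs_unity_root _ 2) ?mul1r // expr2 mulrNN mulr1. Qed.

Lemma abs_int (z : int) : absC z%:~R <= 1.
Proof.
have abs_nat n : absC n%:R <= 1.
  elim: n => [|n IH]; first by rewrite abs0 ler01.
  by rewrite -addn1 natrD; apply: le_trans (abs_ultra _ _) _; rewrite ge_max IH abs1 lexx.
by case: z => n; rewrite ?NegzE ?mulrNz ?absN abs_nat.
Qed.

Lemma abs_sum_lt (I : Type) (s : seq I) (F : I -> C) (eps : R) :
  0 < eps -> (forall x, List.In x s -> absC (F x) < eps) -> absC (\sum_(x <- s) F x) < eps.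
Proof.
move=> e0; elim: s => [|y s IH] h; first by rewrite big_nil abs0.
rewrite big_cons; apply: le_lt_trans (abs_ultra _ _) _.
by rewrite gt_max h /= ?IH //; [move=> x hx; apply: h; right | left].
Qed.

Lemma abs_small_eq0 x : (forall eps, 0 < eps -> absC x < eps) -> x = 0.
Proof.
move=> h; apply: abs_eq0; apply/eqP; rewrite eq_le abs_ge0 andbT leNgt.
by apply/negP => /[dup] /h; rewrite ltxx.
Qed.

Lemma abs_add_dom x y : absC y < absC x -> absC (x + y) = absC x.
Proof.
move=> yx; apply/eqP; rewrite eq_le; apply/andP; split.
  by apply: le_trans (abs_ultra _ _) _; rewrite ge_max lexx ltW.
have := abs_ultra (x + y) (- y); rewrite addrK absN le_max => /orP[// | xy].
by have := lt_le_trans yx xy; rewrite ltxx.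
Qed.

Definition null_series (u : series C) := forall eps : R, 0 < eps ->
  exists N, forall n, (N <= n)%N -> absC (u n) < eps.

Lemma Tate_null g : in_Tate absC g -> null_series g.
Proof.
move=> /(_ 1); rewrite abs1 lexx => /(_ isT) [l hl] eps e0.
have [N hN] := hl eps e0; exists N => n hn.
have -> : g n = (\sum_(i < n.+1) g i * 1 ^+ i) - \sum_(i < n) g i * 1 ^+ i.
  by rewrite big_ord_recr /= expr1n mulr1 addrAC subrr add0r.
rewrite -(subrKA l); apply: le_lt_trans (abs_ultra _ _) _.
by rewrite gt_max hN ?(leq_trans hn) //= -opprB absN hN.
Qed.

Lemma null_bounded u : null_series u -> exists2 B, 0 < B & forall n, absC (u n) <= B.
Proof.
move=> /(_ 1 ltr01) [N hN]; exists (1 + \sum_(i < N) absC (u i)).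
  by rewrite ltr_wpDr ?ltr01 // sumr_ge0 // => i _; apply: abs_ge0.
have sum_ge0 : 0 <= \sum_(i < N) absC (u i) by rewrite sumr_ge0 // => i _; apply: abs_ge0.
move=> n; have [nN|Nn] := ltnP n N; last by rewrite ler_wpDr ?(ltW (hN _ Nn)).
rewrite (bigD1 (Ordinal nN)) //= addrCA ler_wpDr // addr_ge0 ?ler01 //.
by rewrite sumr_ge0 // => i _; apply: abs_ge0.
Qed.

Lemma null_smul g h : null_series g -> null_series h -> null_series (smul g h).
Proof.
move=> hg hh; have [Bg Bg0 hBg] := null_bounded hg; have [Bh Bh0 hBh] := null_bounded hh.
move=> eps e0.
have [N1 h1] := hg (eps / Bh) (divr_gt0 e0 Bh0).
have [N2 h2] := hh (eps / Bg) (divr_gt0 e0 Bg0).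
(* in g_i h_(n-i), either i >= N1 or n - i >= N2 *)
exists (N1 + N2)%N => n hn; apply: abs_sum_lt => // i _; rewrite absM.
have [iN1|iN1] := leqP N1 i.
  apply: le_lt_trans (ler_wpM2l (abs_ge0 _) (hBh _)) _.
  by rewrite -ltr_pdivlMr // h1.
apply: le_lt_trans (ler_wpM2r (abs_ge0 _) (hBg i)) _.
by rewrite mulrC -ltr_pdivlMr // h2 //; lia.
Qed.

Lemma null_lin_comb (I : Type) (s : seq I) (c : I -> int) (F : I -> series C) :
  (forall x, List.In x s -> null_series (F x)) ->
  null_series (fun n => \sum_(x <- s) (c x)%:~R * F x n).
Proof.
move=> hF eps e0; have [N hN] : exists N, forall x n, List.In x s -> (N <= n)%N ->
    absC (F x n) < eps.
  elim: s hF => [|y s IH] hF; first by exists 0%N.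
  have [N1 h1] := hF y (or_introl erefl) eps e0.
  have [N2 h2] := IH (fun x hx => hF x (or_intror hx)).
  exists (N1 + N2)%N => x n [<-|hx] hn; [apply: h1 | apply: h2] => //; lia.
exists N => n hn; apply: abs_sum_lt => // x hx; rewrite absM.
by apply: le_lt_trans (hN x n hx hn); rewrite ler_piMl ?abs_ge0 ?abs_int.
Qed.

Lemma abs_Fq q x : (1 < q)%N -> Fq q x -> x != 0 -> absC x = 1.
Proof.
move=> q1 xq x0; apply: (@abs_unity_root _ q.-1); first by rewrite -subn1 subn_gt0.
by apply: (mulIf x0); rewrite mul1r -exprSr prednK ?xq // ltnW.
Qed.

(* If b(z) = 0 and |z| <= 1, then m = b w vanishes at z: truncating w to a
   polynomial P of large degree n, b P agrees with m below degree n, vanishes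
   at z, and its coefficients of degree >= n are small. *)
Lemma root_pmul_null (b m : {poly C}) (w : series C) z :
  absC z <= 1 -> root b z -> null_series w -> (forall n, m`_n = pmul b w n) -> root m z.
Proof.
move=> hz hb hw hm; apply/eqP/abs_small_eq0 => eps e0.
have [Bb Bb0 hBb] : exists2 B, 0 < B & forall i, absC b`_i <= B.
  apply: null_bounded => e' e'0; exists (size b) => n hn.
  by rewrite nth_default // abs0.
have [N hN] := hw (eps / Bb) (divr_gt0 e0 Bb0).
set sb := size b; set n := (N + sb + size m)%N.
pose P : {poly C} := \poly_(i < n) w i.
have bP_low i : (i < n)%N -> (b * P)`_i = m`_i.
  move=> hi; rewrite hm coefM /pmul; apply: eq_bigr => j _.
  by rewrite coef_poly (leq_ltn_trans (leq_subr _ _) hi).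
have bP_high k : (k < sb)%N -> absC ((b * P)`_(n + k) * z ^+ (n + k)) < eps.
  move=> hk; rewrite absM absX.
  apply: le_lt_trans (_ : absC (b * P)`_(n + k) < eps).
    by rewrite ler_piMr ?abs_ge0 // exprn_ile1 ?abs_ge0.
  rewrite coefM; apply: abs_sum_lt => // j _; rewrite coef_poly.
  case: ifP => hj; last by rewrite mulr0 abs0.
  have [jb|jb] := ltnP j sb; last by rewrite nth_default // mul0r abs0.
  rewrite absM; apply: le_lt_trans (ler_wpM2r (abs_ge0 _) (hBb j)) _.
  rewrite mulrC -ltr_pdivlMr // hN //.
  by move: hj jb (ltn_ord j); rewrite /n /sb; lia.
have bPz : (b * P).[z] = 0 by rewrite hornerM (rootP hb) mul0r.
have size_bP : (size (b * P)%R <= n + sb)%N.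
  apply: leq_trans (size_polyMleq _ _) _.
  by have := size_poly n w; rewrite /P /n /sb; lia.
rewrite (horner_coef_wide z size_bP) big_split_ord /= in bPz.
have -> : m.[z] = \sum_(i < n) (b * P)`_(lshift sb i) * z ^+ (lshift sb i).
  have size_m : (size m <= n)%N by rewrite /n; lia.
  rewrite (horner_coef_wide z size_m); apply: eq_bigr => i _.
  by rewrite bP_low //; exact: (ltn_ord i).
move/eqP: bPz; rewrite addr_eq0 => /eqP ->; rewrite absN.
by apply: abs_sum_lt => // k _; apply: bP_high.
Qed.

Lemma root_abs_le1 (a : {poly C}) z :
  a != 0 -> absC (lead_coef a) = 1 -> (forall i, absC a`_i <= 1) -> root a z -> absC z <= 1.
Proof.
move=> a0 lead1 coef_le1 az; rewrite leNgt; apply/negP => z1.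
have z0 : 0 < absC z by apply: lt_trans z1.
move/rootP: az; rewrite horner_coef.
have -> : size a = (size a).-1.+1 by rewrite prednK // size_poly_gt0.
rewrite big_ord_recr /= addrC => az.
(* the leading term dominates *)
have : absC (a`_(size a).-1 * z ^+ (size a).-1 + \sum_(i < (size a).-1) a`_i * z ^+ i)
    = absC z ^+ (size a).-1.
  rewrite abs_add_dom absM absX -lead_coefE lead1 ?mul1r //.
  apply: abs_sum_lt; first by rewrite exprn_gt0.
  move=> i _; rewrite absM absX.
  apply: le_lt_trans (ler_wpM2r (exprn_ge0 _ (abs_ge0 z)) (coef_le1 i)) _.
  by rewrite mul1r ltr_eXn2l.
by rewrite az abs0 => /esym/eqP; rewrite expf_eq0 (gt_eqF z0) andbF.
Qed.

Lemma root_Fq_poly_abs_le1 q (a : {poly C}) z :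
  (1 < q)%N -> Fq_poly q a -> a != 0 -> root a z -> absC z <= 1.
Proof.
move=> q1 ha a0; apply: root_abs_le1 => // [|i].
  by rewrite lead_coefE (abs_Fq q1) // -lead_coefE lead_coef_eq0.
by have [->|ai0] := eqVneq a`_i 0; rewrite ?abs0 ?ler01 ?(abs_Fq q1).
Qed.

Lemma dvdp_pmul_null (b m : {poly C}) (w : series C) : b != 0 ->
  (forall z, root b z -> absC z <= 1) -> null_series w ->
  (forall n, m`_n = pmul b w n) -> b %| m.
Proof.
have [k] := ubnP (size b); elim: k b m => // k IH b m hk b0 b_roots hw hm.
have [b1|b1] := eqVneq (size b) 1%N.
  by apply: dvdp_trans (dvd1p m); rewrite dvdp1 b1.
have [z bz] := closed_rootP b b1.
have /dvdpP [b' hb'] : ('X - z%:P) %| b by rewrite -root_factor_theorem.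
have /dvdpP [m' hm'] : ('X - z%:P) %| m.
  by rewrite -root_factor_theorem (root_pmul_null (b_roots z bz) bz hw hm).
have b'0 : b' != 0 by apply: contra b0; rewrite hb' => /eqP ->; rewrite mul0r.
have hm2 n : m'`_n = pmul b' w n.
  suff /(congr1 (fun u => u n)) : (fun n => m'`_n) = pmul b' w by [].
  apply: (@pmul_inj _ ('X - z%:P)); first by rewrite polyXsubC_eq0.
  rewrite -pmulM mulrC -hb'; apply/funext => n'; rewrite -hm hm' mulrC.
  by rewrite /pmul coefM.
rewrite hb' hm' dvdp_mul // (IH b') //.
- by move: hk; rewrite hb' size_mul ?polyXsubC_eq0 // size_XsubC addn2 ltnS.
- by move=> z' hz'; apply: b_roots; rewrite hb' rootM hz'.
Qed.

End UltrametricAbsoluteValue.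

Section FrobeniusTwist.
Variables (C : closedFieldType) (q : nat).
Hypotheses (q_pchar : [pchar C].-nat q) (q_gt1 : (1 < q)%N).

Lemma frob_zmod_morphism : zmod_morphism (fun x : C => x ^+ q).
Proof. by move=> x y; rewrite exprDn_pchar // exprNn_pchar. Qed.

Lemma frob_inj : injective (fun x : C => x ^+ q).
Proof.
move=> x y /eqP; rewrite -subr_eq0 -frob_zmod_morphism expf_eq0 subr_eq0.
by case/andP=> _ /eqP.
Qed.

Lemma qrootK (x : C) : qroot q x ^+ q = x.
Proof. by have /orP[|/eqP //] := xchooseP (exists_qroot q x); case: q q_gt1. Qed.

Lemma qroot_zmod_morphism : zmod_morphism (@qroot C q).
Proof. by move=> x y; apply: frob_inj; rewrite frob_zmod_morphism !qrootK. Qed.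

Lemma qroot_monoid_morphism : monoid_morphism (@qroot C q).
Proof.
by split=> [|x y]; apply: frob_inj; rewrite ?exprMn !qrootK ?expr1n.
Qed.

HB.instance Definition _ := GRing.isZmodMorphism.Build C C (@qroot C q) qroot_zmod_morphism.
HB.instance Definition _ := GRing.isMonoidMorphism.Build C C (@qroot C q) qroot_monoid_morphism.

Definition fq_pred : pred C := [pred x | x ^+ q == x].

Lemma fq_subring_closed : subring_closed fq_pred.
Proof.
split=> [|x y /eqP hx /eqP hy|x y /eqP hx /eqP hy]; apply/eqP.
- exact: expr1n.
- by rewrite frob_zmod_morphism hx hy.
- by rewrite exprMn hx hy.
Qed.

HB.instance Definition _ := GRing.isSubringClosed.Build C fq_pred fq_subring_closed.
Definition fqS : subringClosed C := GRing.SubringClosed.clone C fq_pred _.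

Lemma Fq_polyP (a : {poly C}) : Fq_poly q a <-> a \is a polyOver fqS.
Proof.
split=> [ha|/polyOverP ha i]; first by apply/polyOverP => i; rewrite inE; apply/eqP/ha.
by have := ha i; rewrite inE => /eqP.
Qed.

Lemma qroot_Fq (x : C) : Fq q x -> qroot q x = x.
Proof. by move=> hx; apply: frob_inj; rewrite qrootK hx. Qed.

Lemma ptwist_Fq (a : {poly C}) : a \is a polyOver fqS -> ptwist q a = a.
Proof.
move=> /polyOverP ha; apply/polyP => i; rewrite coef_map_id0 ?rmorph0 //.
by apply: qroot_Fq; have := ha i; rewrite inE => /eqP.
Qed.

Lemma map_ptwist_scale m n (a : {poly C}) (A : 'M[{poly C}]_(m, n)) :
  a \is a polyOver fqS -> map_mx (ptwist q) (a *: A) = a *: map_mx (ptwist q) A.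
Proof.
move=> Fa; apply/matrixP => i j; rewrite !mxE -{2}(ptwist_Fq Fa).
exact: (rmorphM (map_poly (@qroot C q))).
Qed.

Lemma vtwist_mulmx m n (A : 'M[{poly C}]_(m, n)) (h : 'cV[{poly C}]_n) :
  vtwist q (A *m h) = map_mx (ptwist q) A *m vtwist q h.
Proof. exact: (map_mxM (map_poly (@qroot C q))). Qed.

Lemma vtwist_delta n (j : 'I_n) : vtwist q (delta_mx j 0 : 'cV[{poly C}]_n) = delta_mx j 0.
Proof. exact: (map_delta_mx (map_poly (@qroot C q))). Qed.

Variable T : C.

Definition k_pred : pred C := fun x => `[< in_k q T x >].

Lemma k_divring_closed : divring_closed k_pred.
Proof.
have kE x : (x \in k_pred) <-> in_k q T x by split => /asboolP.
split.
- apply/kE; exists 1, 1; split; rewrite ?hornerC ?divr1 ?oner_eq0 //.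
  + exact/Fq_polyP/rpred1.
  + exact/Fq_polyP/rpred1.
- move=> x y /kE[a [b [/Fq_polyP ha /Fq_polyP hb hbT ->]]].
  move=> /kE[c [d [/Fq_polyP hc /Fq_polyP hd hdT ->]]].
  apply/kE; exists (a * d - c * b), (b * d); split.
  + by apply/Fq_polyP; rewrite rpredB ?rpredM.
  + by apply/Fq_polyP; rewrite rpredM.
  + by rewrite hornerM mulf_neq0.
  + by rewrite !hornerE; field; apply/andP.
- move=> x y /kE[a [b [/Fq_polyP ha /Fq_polyP hb hbT ->]]].
  move=> /kE[c [d [/Fq_polyP hc /Fq_polyP hd hdT ->]]].
  apply/kE; have [c0|c0] := eqVneq c.[T] 0.
    exists 0, 1; split; rewrite ?hornerC ?oner_eq0 ?c0 ?mul0r ?invr0 ?mulr0 //.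
    + exact/Fq_polyP/rpred0.
    + exact/Fq_polyP/rpred1.
  exists (a * d), (b * c); split; try by apply/Fq_polyP; rewrite rpredM.
  + by rewrite hornerM mulf_neq0.
  + by rewrite !hornerE; field; rewrite c0 hbT hdT.
Qed.

HB.instance Definition _ := GRing.isDivringClosed.Build C k_pred k_divring_closed.
Definition kS : divringClosed C := GRing.DivringClosed.clone C k_pred _.

Definition kbar_pred : pred C := alg_over_pred kS.
HB.instance Definition _ :=
  GRing.isDivringClosed.Build C kbar_pred (alg_over_divring_closed kS).
Definition kbarS : divringClosed C := GRing.DivringClosed.clone C kbar_pred _.

Lemma in_kbarP x : in_kbar q T x <-> x \in kbarS.
Proof.
rewrite [x \in kbarS]unfold_in /= /kbar_pred /alg_over_pred asboolE.
split=> -[p [p0 pk px]]; exists p; split=> //.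
  by apply/polyOverP => i; apply/asboolP.
by move=> i; apply/asboolP/(polyOverP pk).
Qed.

Lemma kbar_polyP (p : {poly C}) : kbar_poly q T p <-> p \is a polyOver kbarS.
Proof.
split=> [hp|/polyOverP hp i]; last exact/in_kbarP.
by apply/polyOverP => i; apply/in_kbarP.
Qed.

Lemma polyOver_fq_kbar (a : {poly C}) : a \is a polyOver fqS -> a \is a polyOver kbarS.
Proof.
move=> /polyOverP ha; apply/polyOverP => i; apply/mem_alg_over/asboolP.
exists (a`_i)%:P, 1; split; rewrite ?hornerC ?divr1 ?oner_eq0 //.
  by apply/Fq_polyP; rewrite polyOverC ha.
exact/Fq_polyP/rpred1.
Qed.

Lemma in_HP r (h : 'cV[{poly C}]_r) : in_H q T h <-> h \is a mxOver (polyOver kbarS).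
Proof.
split=> [hh|/mxOverP hh i]; last exact/kbar_polyP/hh.
by apply/mxOverP => i j; rewrite ord1; apply/kbar_polyP.
Qed.

Lemma in_H_scale r (P : {poly C}) (h : 'cV[{poly C}]_r) :
  P \is a polyOver kbarS -> in_H q T h -> in_H q T (P *: h).
Proof.
by move=> kP hh i; rewrite mxE; apply/kbar_polyP; have /kbar_polyP := hh i; apply: rpredM.
Qed.

Lemma in_H_sum r n (F : 'I_n -> 'cV[{poly C}]_r) :
  (forall k, in_H q T (F k)) -> in_H q T (\sum_(k < n) F k).
Proof.
by move=> hF i; rewrite summxE; apply/kbar_polyP/rpred_sum => k _; apply/kbar_polyP/hF.
Qed.

Lemma in_H_delta r (j : 'I_r) : in_H q T (delta_mx j 0).
Proof. by move=> i; rewrite mxE; apply/kbar_polyP; rewrite rpred_nat. Qed.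

Lemma in_H_mulmx r r' (M : 'M[{poly C}]_(r', r)) (h : 'cV[{poly C}]_r) :
  M \is a mxOver (polyOver kbarS) -> in_H q T h -> in_H q T (M *m h).
Proof. by move=> kM /in_HP kh; apply/in_HP; rewrite mxOverM. Qed.

Lemma morph_mx_mulmx r r' (N : 'M[{poly C}]_(r', r)) : morph_mx (mulmx N) = N.
Proof. by apply/matrixP => i j; rewrite mxE -colE mxE. Qed.

Section Morphisms.
Variables (r0 r1 : nat) (Phi0 : 'M[{poly C}]_r0) (Phi1 : 'M[{poly C}]_r1).

Lemma morph_mxE f : is_morphism q T Phi0 Phi1 f -> forall h, in_H q T h -> f h = morph_mx f *m h.
Proof.
case=> _ fD fC fX _.
have f0 : f 0 = 0.
  have H0 : in_H q T (0 : 'cV[{poly C}]_r0) by apply/in_HP/mxOver0/rpred0.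
  by have := fD 0 0 H0 H0; rewrite addr0 => e; apply: (addrI (f 0)); rewrite addr0 -e.
have f_sum n (F : 'I_n -> 'cV[{poly C}]_r0) : (forall k, in_H q T (F k)) ->
    f (\sum_(k < n) F k) = \sum_(k < n) f (F k).
  elim: n F => [|n IH] F hF; first by rewrite !big_ord0 f0.
  by rewrite !big_ord_recr /= fD ?IH //; apply: in_H_sum.
have f_Xn n h : in_H q T h -> f ('X^n *: h) = 'X^n *: f h.
  elim: n h => [|n IH] h hh; first by rewrite !expr0 !scale1r.
  by rewrite exprSr -!scalerA IH ?fX //; apply: in_H_scale; rewrite ?polyOverX.
have f_poly P h : P \is a polyOver kbarS -> in_H q T h -> f (P *: h) = P *: f h.
  move=> /polyOverP kP hh; rewrite -(coefK P) poly_def !scaler_suml f_sum => [|k].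
    apply: eq_bigr => k _; rewrite -mul_polyC -!scalerA fC ?f_Xn //.
      exact/in_kbarP.
    by apply: in_H_scale; rewrite ?polyOverXn.
  rewrite -mul_polyC -scalerA; apply: in_H_scale; first by rewrite polyOverC.
  by apply: in_H_scale; rewrite ?polyOverXn.
move=> h hh.
have h_delta : h = \sum_(j < r0) h j 0 *: delta_mx j 0.
  by rewrite {1}(matrix_sum_delta h); apply: eq_bigr => j _; rewrite big_ord1.
rewrite [in LHS]h_delta f_sum => [|j]; last by apply: in_H_scale (in_H_delta _); apply/kbar_polyP.
apply/matrixP => i k; rewrite ord1 !mxE summxE; apply: eq_bigr => j _.
by rewrite f_poly; [rewrite !mxE mulrC | apply/kbar_polyP | apply: in_H_delta].
Qed.

Lemma morph_mx_polyOver f :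
  is_morphism q T Phi0 Phi1 f -> morph_mx f \is a mxOver (polyOver kbarS).
Proof.
by case=> fH _ _ _ _; apply/mxOverP => i j; rewrite mxE; apply/kbar_polyP/(fH _ (in_H_delta j)).
Qed.

Lemma morph_mx_twist f : is_morphism q T Phi0 Phi1 f -> Phi0 \is a mxOver (polyOver kbarS) ->
  morph_mx f *m Phi0 = Phi1 *m map_mx (ptwist q) (morph_mx f).
Proof.
move=> f_morph kPhi0; have [_ _ _ _ fS] := f_morph.
apply/row_matrixP => i; apply/rowP => j.
have Hj := in_H_delta j; have HPhij : in_H q T (Phi0 *m delta_mx j 0) by apply: in_H_mulmx.
have := fS _ Hj; rewrite /sigH vtwist_delta !(morph_mxE f_morph) //.
by rewrite vtwist_mulmx vtwist_delta !mulmxA => /colP/(_ i); rewrite -!colE !mxE.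
Qed.

Lemma mulmx_is_morphism (N : 'M[{poly C}]_(r1, r0)) : N \is a mxOver (polyOver kbarS) ->
  N *m Phi0 = Phi1 *m map_mx (ptwist q) N -> is_morphism q T Phi0 Phi1 (mulmx N).
Proof.
move=> kN twistN; split=> [h|h h' _ _|c h _ _|h _|h _].
- exact: in_H_mulmx.
- exact: mulmxDr.
- by rewrite scalemxAr.
- by rewrite scalemxAr.
- by rewrite /sigH mulmxA twistN -mulmxA vtwist_mulmx.
Qed.

End Morphisms.

End FrobeniusTwist.

Section BettiRealization.
Variables (R : realType) (C : closedFieldType) (absC : C -> R) (q : nat) (T : C).
Hypotheses (q_pchar : [pchar C].-nat q) (q_gt1 : (1 < q)%N).
Hypothesis abs_def : forall x, 0 <= absC x /\ (absC x = 0 <-> x = 0).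
Hypothesis absM : forall x y, absC (x * y) = absC x * absC y.
Hypothesis abs_ultra : forall x y, absC (x + y) <= Num.max (absC x) (absC y).
Variables (r0 r1 : nat) (Phi0 : 'M[{poly C}]_r0) (Phi1 : 'M[{poly C}]_r1).

(* [betti_map f] is [smulmx (morph_mx f)] by definition. *)
Definition smulmx (M : 'M[{poly C}]_(r1, r0)) (v : svec C r0) : svec C r1 :=
  fun i n => \sum_(j < r0) pmul (M i j) (v j) n.

Definition unit_svec (j : 'I_r0) : svec C r0 :=
  fun i n => if (i == j) && (n == 0%N) then 1 else 0.

Definition nat_img_map (l : formal C r0) (phi : svec C r0 -> svec C r1) : svec C r1 :=
  fun i n => \sum_(x <- l) x.1%:~R * smul x.2.1 (phi x.2.2 i) n.

Lemma unit_svec_Htilde j : in_Htilde absC (unit_svec j).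
Proof.
move=> i z _; exists (if i == j then 1 else 0) => eps e0; exists 1%N.
case=> // n _; rewrite big_ord_recl big1 => [|k _]; last by rewrite /unit_svec andbF mul0r.
by rewrite /unit_svec andbT expr0 mulr1 addr0 subrr (abs0 abs_def).
Qed.

Lemma smulmx_unit_svec M j i n : smulmx M (unit_svec j) i n = (M i j)`_n.
Proof.
rewrite /smulmx (bigD1 j) //= big1 => [|k /negbTE kj]; last first.
  by rewrite /pmul big1 // => m _; rewrite /unit_svec kj mulr0.
rewrite addr0 /pmul (bigD1 ord_max) //= big1 => [|m /eqP mn]; last first.
  have mn_lt : (m < n)%N.
    by rewrite ltn_neqAle -ltnS ltn_ord andbT; apply/eqP => e; apply/mn/val_inj.
  by rewrite /unit_svec eqxx /= subn_eq0 leqNgt mn_lt mulr0.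
by rewrite /unit_svec eqxx subnn mulr1 addr0.
Qed.

Lemma smulmx_nat_img M l : smulmx M (nat_img l) = nat_img_map l (smulmx M).
Proof.
apply/funext => i; apply/funext => n; rewrite /smulmx /nat_img /nat_img_map.
under eq_bigr do rewrite pmul_sumr.
rewrite exchange_big; apply: eq_bigr => x _.
by rewrite smul_sumr mulr_sumr; apply: eq_bigr => j _; rewrite pmul_scaler pmul_smul.
Qed.

Lemma nat_img_map_null l psi i : valid_formal absC q Phi0 l ->
  (forall v, in_Betti absC q Phi0 v -> in_Betti absC q Phi1 (psi v)) ->
  null_series absC (nat_img_map l psi i).
Proof.
move=> lv psiB; apply: null_lin_comb => // x /lv[g_Tate /psiB[psi_Tate _]].
by apply: null_smul => //; apply: Tate_null.
Qed.

Hypothesis Phi0_rat : rigid_analytically_trivial absC q Phi0.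
Hypothesis Phi0_dual : is_dual_tmotive q T Phi0.

(* Every coefficient of a matrix is recovered from the induced map on H^Betti,
   because the unit vectors of C{t}^r0 lie in C{t} (x) H0^Betti. *)
Lemma coef_mx_nat_img_map (j : 'I_r0) : exists2 l, valid_formal absC q Phi0 l &
  forall (M : 'M[{poly C}]_(r1, r0)) i n, (M i j)`_n = nat_img_map l (smulmx M) i n.
Proof.
have [l [lv hl]] := Phi0_rat.1 _ (unit_svec_Htilde j).
exists l => // M i n; rewrite -smulmx_unit_svec -smulmx_nat_img.
by congr smulmx; apply/funext => k; apply/funext => m; rewrite hl.
Qed.

Lemma morphism_eq_of_betti_map f f' :
  is_morphism q T Phi0 Phi1 f -> is_morphism q T Phi0 Phi1 f' ->
  (forall v, in_Betti absC q Phi0 v -> forall i n, betti_map f v i n = betti_map f' v i n) ->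
  forall h, in_H q T h -> f h = f' h.
Proof.
move=> f_morph f'_morph betti_eq h hh.
rewrite (morph_mxE q_pchar f_morph hh) (morph_mxE q_pchar f'_morph hh); congr mulmx.
apply/matrixP => i j; apply/polyP => n; have [l lv hl] := coef_mx_nat_img_map j.
rewrite !hl; apply: eq_big_In => x /lv[_ xB]; congr (_ * smul _ _ _).
by apply/funext => m; apply: betti_eq.
Qed.

Section BettiDivisible.
Variables (psi : svec C r0 -> svec C r1) (a : {poly C}).
Variable f : 'cV[{poly C}]_r0 -> 'cV[{poly C}]_r1.
Hypothesis psiB : forall v, in_Betti absC q Phi0 v -> in_Betti absC q Phi1 (psi v).
Hypotheses (a_Fq : Fq_poly q a) (a0 : a != 0) (f_morph : is_morphism q T Phi0 Phi1 f).
Hypothesis betti_f : forall v, in_Betti absC q Phi0 v ->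
  forall i n, betti_map f v i n = vact a (psi v) i n.

(* The entries of the matrix of f are a times power series whose coefficients
   tend to 0, and all roots of a lie in the closed unit disc. *)
Lemma dvdp_morph_mx i j : a %| morph_mx f i j.
Proof.
have [l lv hl] := coef_mx_nat_img_map j.
apply: (dvdp_pmul_null abs_def absM abs_ultra (w := nat_img_map l psi i)) => //.
- by move=> z; apply: (root_Fq_poly_abs_le1 abs_def absM abs_ultra q_gt1).
- exact: nat_img_map_null.
move=> n; rewrite hl /nat_img_map pmul_sumr; apply: eq_big_In => x /lv[_ xB].
by rewrite pmul_scaler pmul_smul; congr (_ * smul _ _ _); apply/funext => m; apply: betti_f.
Qed.

Lemma betti_map_divisible : exists g, is_morphism q T Phi0 Phi1 g /\
  forall v, in_Betti absC q Phi0 v -> forall i n, betti_map g v i n = psi v i n.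
Proof.
have kPhi0 : Phi0 \is a mxOver (polyOver (kbarS q_pchar T)).
  by have [kPhi0 _ _] := Phi0_dual; apply/mxOverP => i j; apply/kbar_polyP.
set M := morph_mx f.
pose N := \matrix_(i, j) (M i j %/ a).
have M_aN : M = a *: N.
  by apply/matrixP => i j; rewrite [RHS]mxE [N _ _]mxE divpKC ?dvdp_morph_mx.
have a_fq : a \is a polyOver (fqS q_pchar) by apply/Fq_polyP.
have a_kbar : a \is a polyOver (kbarS q_pchar T) by apply: polyOver_fq_kbar.
have kN : N \is a mxOver (polyOver (kbarS q_pchar T)).
  apply/mxOverP => i j; rewrite mxE divp_polyOver //.
  exact: (mxOverP (morph_mx_polyOver q_pchar f_morph)).
have twist_N : N *m Phi0 = Phi1 *m map_mx (ptwist q) N.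
  have := morph_mx_twist q_gt1 f_morph kPhi0; rewrite -/M M_aN.
  rewrite map_ptwist_scale // -scalemxAl -scalemxAr => e.
  by apply/matrixP => i j; move/matrixP/(_ i j): e; rewrite !mxE => /mulfI; apply.
exists (mulmx N); split; first exact: mulmx_is_morphism.
move=> v vB i n; apply: (congr1 (fun u => u n)); apply: (pmul_inj a0); apply/funext => m.
rewrite -[RHS](betti_f vB) /betti_map -/M M_aN morph_mx_mulmx pmul_sumr.
by apply: eq_bigr => j _; rewrite -pmulM [(a *: N) i j]mxE.
Qed.

End BettiDivisible.

End BettiRealization.

Unset Implicit Arguments.
Set Strict Implicit.
Theorem theorem4 (R : realType) (C : closedFieldType) (absC : C -> R)
    (q : nat) (T : C) (r0 r1 : nat)
    (Phi0 : 'M[{poly C}]_r0) (Phi1 : 'M[{poly C}]_r1) :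
  is_Cinf absC q T ->
  is_dual_tmotive q T Phi0 -> is_dual_tmotive q T Phi1 ->
  rigid_analytically_trivial absC q Phi0 ->
  rigid_analytically_trivial absC q Phi1 ->
  (* injectivity of Hom(H0,H1) -> Hom_{F_q[t]}(H0^Betti, H1^Betti) *)
  (forall f f' : 'cV[{poly C}]_r0 -> 'cV[{poly C}]_r1,
     is_morphism q T Phi0 Phi1 f -> is_morphism q T Phi0 Phi1 f' ->
     (forall v, in_Betti absC q Phi0 v ->
        forall i n, betti_map f v i n = betti_map f' v i n) ->
     forall h, in_H q T h -> f h = f' h) /\
  (* the cokernel has no F_q[t]-torsion *)
  (forall (psi : svec C r0 -> svec C r1) (a : {poly C}),
     is_Fqt_hom absC q Phi0 Phi1 psi -> Fq_poly q a -> a != 0 ->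
     (exists f, is_morphism q T Phi0 Phi1 f /\
        forall v, in_Betti absC q Phi0 v ->
          forall i n, betti_map f v i n = vact a (psi v) i n) ->
     exists g, is_morphism q T Phi0 Phi1 g /\
        forall v, in_Betti absC q Phi0 v ->
          forall i n, betti_map g v i n = psi v i n).
Proof.
move=> [[p [e [p_prime e_gt0 qE p_char]]] abs_def absM abs_ultra _] dual0 _ rat0 _.
have q_pchar : [pchar C].-nat q by rewrite qE pnatX (pnatE _ p_prime) p_char.
have q_gt1 : (1 < q)%N by rewrite qE -(expn0 p) ltn_exp2l ?prime_gt1.
split; first exact: (morphism_eq_of_betti_map q_pchar abs_def rat0).
move=> psi a [psiB _ _] a_Fq a0 [f [f_morph betti_f]].
exact: (betti_map_divisible q_pchar q_gt1 abs_def absM abs_ultra rat0 dual0 psiB a_Fq a0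
         f_morph betti_f).
Qed.
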